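(* Let $n,d\ge1$, let $\eta^{(i)}_j\ge0$ ($i,j\in[n]$) be coefficients such that the matrix $A$ with $A_{ij}=1$ if $\eta^{(i)}_j>0$ and $0$ otherwise satisfies $A^n>0$ entrywise, and let $\lambda>0$ be a fixed constant depending only on $n,d$. For $\mathbf{x}_1,\ldots,\mathbf{x}_n\in\mathbb{S}^{d-1}$ define $\Phi(\mathbf{x}_1,\ldots,\mathbf{x}_n)=\min_{\mathbf{v}\in\mathbb{S}^{d-1}}\max_{i\in[n]}\angle(\mathbf{v},\mathbf{x}_i)$. There exists $c=c(n,d,\bm{\eta})>0$ such that the following holds: whenever $\mathbf{x}_1,\ldots,\mathbf{x}_n\in\mathbb{S}^{d-1}$ satisfy $\langle\mathbf{w},\mathbf{x}_i\rangle\ge\lambda$ for all $i$ for some unit vector $\mathbf{w}$, and $\mathbf{x}_1',\ldots,\mathbf{x}_n'$ are obtained from them by $n$ iterations of the update $\mathbf{x}^{(i)}\mapsto P_{\mathbb{S}^{d-1}}\big(\mathbf{x}^{(i)}+\sum_{j=1}^n\eta^{(i)}_j\mathbf{x}^{(j)}\big)$ (applied simultaneously to all $i$), then $\Phi(\mathbf{x}_1',\ldots,\mathbf{x}_n')\le(1-c)\,\Phi(\mathbf{x}_1,\ldots,\mathbf{x}_n)$.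
   Context: $\mathbb{S}^{d-1}$ is the unit sphere in $\mathbb{R}^d$, $P_{\mathbb{S}^{d-1}}(\mathbf{w})=\mathbf{w}/\|\mathbf{w}\|_2$, and $\angle(\mathbf{v},\mathbf{x})\in[0,\pi]$ is the angle between vectors. (The update is the party-model update when no agents are split by the random issue, so the subtracted sum is empty.) *)

From HB Require Import structures.
From mathcomp Require Import all_boot all_order all_algebra.
From mathcomp Require Import all_classical all_reals all_analysis.

Import Order.TTheory GRing.Theory Num.Theory.
Local Open Scope ring_scope.
Local Open Scope classical_set_scope.

Section Defs.
Context {R : realType}.

Definition dotv {d : nat} (u v : 'rV[R]_d) : R := \sum_(k < d) u ord0 k * v ord0 k.
Definition norm2 {d : nat} (u : 'rV[R]_d) : R := Num.sqrt (dotv u u).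

Definition usphere (d : nat) : set 'rV[R]_d := [set v | norm2 v = 1].

Definition projS {d : nat} (w : 'rV[R]_d) : 'rV[R]_d := (norm2 w)^-1 *: w.

Definition vangle {d : nat} (v x : 'rV[R]_d) : R :=
  acos (dotv v x / (norm2 v * norm2 x)).

(* Phi(x_1..x_n) = min_{v in S^{d-1}} max_i angle(v, x_i);
   the min is attained (compactness), so it equals the infimum. *)
Definition Phi {n d : nat} (x : 'I_n -> 'rV[R]_d) : R :=
  inf [set (\big[Num.max/0]_(i < n) vangle v (x i)) | v in usphere d].

Definition party_update {n d : nat} (eta : 'I_n -> 'I_n -> R)
    (x : 'I_n -> 'rV[R]_d) : 'I_n -> 'rV[R]_d :=
  fun i => projS (x i + \sum_(j < n) eta i j *: x j).

Definition adj_mx {n : nat} (eta : 'I_n -> 'I_n -> R) : 'M[R]_n :=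
  \matrix_(i, j) (if 0 < eta i j then 1 else 0).

End Defs.

From HB Require Import structures.
From mathcomp Require Import all_boot all_order all_algebra.
From mathcomp Require Import all_classical all_reals all_analysis.
From mathcomp Require Import ring lra.
Import Order.TTheory GRing.Theory Num.Theory.
Import numFieldNormedType.Exports.
Local Open Scope ring_scope.
Local Open Scope classical_set_scope.
Set Implicit Arguments.
Unset Strict Implicit.

(* After n steps every agent is a combination x'_i = sum_j W_ij x_j whose
   weights are all at least some eps > 0: a single normalisation divides by at
   most 1 + sum_ij eta_ij, so the weights dominate a positive multiple of the
   entries of A^n.  All iterates stay in the cap {y | <w, y> >= lam}, hence
   lam * sum_j W_ij <= 1, while |x'_i| = 1 forces
   (sum_j W_ij)^2 - 1 >= eps^2 (1 - cos gamma), gamma the largest angle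
   between two agents.  For a centre v of radius theta <= 2 gamma with
   cos theta >= lam / 2 this gives
   <v, x'_i> >= cos theta + (lam eps)^2 / 16 * (1 - cos theta), and with
   theta^2 <= 4 (1 - cos theta) every angle(v, x'_i) is at most
   (1 - (lam eps)^2 / 64) theta.  Near-optimal centres satisfy both
   constraints, which transfers the contraction to Phi. *)

Section Dot.
Variables (R : realType) (d : nat).
Implicit Types (u v w z : 'rV[R]_d).

Lemma dotvC u v : dotv u v = dotv v u.
Proof. by apply: eq_bigr => k _; rewrite mulrC. Qed.

Lemma dotvDl u u' v : dotv (u + u') v = dotv u v + dotv u' v.
Proof. by rewrite /dotv -big_split; apply: eq_bigr => k _; rewrite mxE mulrDl. Qed.

Lemma dotvDr u v v' : dotv u (v + v') = dotv u v + dotv u v'.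
Proof. by rewrite dotvC dotvDl [dotv v u]dotvC [dotv v' u]dotvC. Qed.

Lemma dotvZl a u v : dotv (a *: u) v = a * dotv u v.
Proof. by rewrite /dotv mulr_sumr; apply: eq_bigr => k _; rewrite mxE mulrA. Qed.

Lemma dotvZr a u v : dotv u (a *: v) = a * dotv u v.
Proof. by rewrite dotvC dotvZl dotvC. Qed.

Lemma dotv_ge0 u : 0 <= dotv u u.
Proof. by apply: sumr_ge0 => k _; rewrite -expr2 sqr_ge0. Qed.

Lemma usphereP u : u \in usphere d <-> dotv u u = 1.
Proof.
rewrite inE /usphere /norm2 /=; split=> [h|->]; last exact: sqrtr1.
by rewrite -(sqr_sqrtr (dotv_ge0 u)) h expr1n.
Qed.

Lemma sqr_dotv_unit_le w z : dotv w w = 1 -> dotv w z ^+ 2 <= dotv z z.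
Proof.
move=> w_unit; have := dotv_ge0 (z + (- dotv w z) *: w).
by rewrite !(dotvDl, dotvDr, dotvZl, dotvZr) w_unit (dotvC z w); nra.
Qed.

Lemma dotv_unit_bound w z : dotv w w = 1 -> dotv z z = 1 -> -1 <= dotv w z <= 1.
Proof.
move=> w_unit z_unit; have := sqr_dotv_unit_le z w_unit.
by rewrite z_unit => h; apply/andP; split; nra.
Qed.

Lemma dotv_le_norm2 w z : dotv w w = 1 -> dotv w z <= norm2 z.
Proof.
move=> w_unit; apply: le_trans (ler_norm _) _.
by rewrite -sqrtr_sqr ler_sqrt ?sqr_dotv_unit_le ?dotv_ge0.
Qed.

Lemma dotv_projS w z : dotv w (projS z) = dotv w z / norm2 z.
Proof. by rewrite dotvZr mulrC. Qed.

Lemma projS_unit z : 0 < norm2 z -> dotv (projS z) (projS z) = 1.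
Proof.
move=> z_gt0; rewrite dotvZl dotvZr -[dotv z z]sqr_sqrtr ?dotv_ge0 //.
by rewrite -/(norm2 z) mulrA -expr2 -exprMn mulVf ?expr1n ?gt_eqF.
Qed.

End Dot.

Section Combination.
Variables (R : realType) (n d : nat) (y : 'I_n -> 'rV[R]_d).
Implicit Types (c : 'I_n -> R) (u w : 'rV[R]_d).
Local Notation comb c := (\sum_(j < n) c j *: y j).

Lemma dotv_sumr u c : dotv u (comb c) = \sum_j c j * dotv u (y j).
Proof.
rewrite /dotv; under eq_bigr do rewrite summxE mulr_sumr.
rewrite exchange_big; apply: eq_bigr => j _; rewrite mulr_sumr.
by apply: eq_bigr => k _; rewrite mxE mulrCA.
Qed.

Lemma dotv_suml u c : dotv (comb c) u = \sum_j c j * dotv (y j) u.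
Proof. by rewrite dotvC dotv_sumr; apply: eq_bigr => j _; rewrite dotvC. Qed.

Lemma dotv_comb c :
  dotv (comb c) (comb c) = \sum_j \sum_k c j * c k * dotv (y j) (y k).
Proof.
rewrite dotv_suml; apply: eq_bigr => j _; rewrite dotv_sumr mulr_sumr.
by apply: eq_bigr => k _; rewrite mulrA.
Qed.

Lemma dotv_comb_ge w lam c : (forall j, 0 <= c j) -> (forall j, lam <= dotv w (y j)) ->
  lam * \sum_j c j <= dotv w (comb c).
Proof.
move=> c_ge0 y_ge; rewrite dotv_sumr mulr_sumr; apply: ler_sum => j _.
by rewrite mulrC ler_wpM2l.
Qed.

Hypothesis y_unit : forall j, dotv (y j) (y j) = 1.

Lemma sqr_sum_subr_dotv_comb c :
  (\sum_j c j) ^+ 2 - dotv (comb c) (comb c)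
  = \sum_j \sum_k c j * c k * (1 - dotv (y j) (y k)).
Proof.
rewrite dotv_comb expr2 mulr_suml -sumrB; apply: eq_bigr => j _.
by rewrite mulr_sumr -sumrB; apply: eq_bigr => k _; ring.
Qed.

Lemma comb_pair_gap_ge0 c j k : (forall j, 0 <= c j) ->
  0 <= c j * c k * (1 - dotv (y j) (y k)).
Proof.
move=> c_ge0; rewrite !mulr_ge0 // subr_ge0.
by case/andP: (dotv_unit_bound (y_unit j) (y_unit k)).
Qed.

Lemma norm2_comb_le c : (forall j, 0 <= c j) -> norm2 (comb c) <= \sum_j c j.
Proof.
move=> c_ge0; rewrite -(ger0_norm (sumr_ge0 _ (fun j _ => c_ge0 j))) -sqrtr_sqr.
rewrite ler_sqrt ?sqr_ge0 // -subr_ge0 sqr_sum_subr_dotv_comb.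
by apply: sumr_ge0 => j _; apply: sumr_ge0 => k _; exact: comb_pair_gap_ge0.
Qed.

Lemma comb_unit_pair_le c p q : (forall j, 0 <= c j) ->
  dotv (comb c) (comb c) = 1 ->
  c p * c q * (1 - dotv (y p) (y q)) <= (\sum_j c j) ^+ 2 - 1.
Proof.
move=> c_ge0 comb_unit.
rewrite -[X in _ <= _ - X]comb_unit sqr_sum_subr_dotv_comb.
pose F j := \sum_k c j * c k * (1 - dotv (y j) (y k)).
have F_ge0 j : 0 <= F j by apply: sumr_ge0 => k _; exact: comb_pair_gap_ge0.
apply: le_trans (_ : F p <= _); last first.
  by rewrite (bigD1 p) //= lerDl sumr_ge0 // => j _; exact: F_ge0.
by rewrite /F (bigD1 q) //= lerDl sumr_ge0 // => k _; exact: comb_pair_gap_ge0.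
Qed.

End Combination.

Section Trigonometry.
Variable R : realType.
Implicit Types (a b c t u : R).

Lemma ler_cos : {in `[0, pi]%R &, {mono (@cos R) : x y /~ y <= x}}.
Proof. by move=> x y x_in y_in; rewrite !leNgt (ltr_cos y_in x_in). Qed.

Lemma ler_acos : {in `[-1, 1]%R &, {mono (@acos R) : u u' /~ u' <= u}}.
Proof.
move=> u u' u_in u'_in.
have acos_in v : v \in `[-1, 1]%R -> acos v \in `[0, pi]%R.
  by rewrite !in_itv /= => v_in; rewrite acos_ge0 ?acos_lepi.
by rewrite -ler_cos ?acos_in // !acosK.
Qed.

Lemma ltr_acos : {in `[-1, 1]%R &, {mono (@acos R) : u u' /~ u' < u}}.
Proof. by move=> u u' u_in u'_in; rewrite !ltNge (ler_acos u'_in u_in). Qed.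

Lemma acos_le u t : -1 <= u <= 1 -> 0 <= t <= pi -> (acos u <= t) = (cos t <= u).
Proof.
move=> u_in t_in; rewrite -{2}[u]acosK ?in_itv //.
by rewrite ler_cos ?in_itv /= ?acos_ge0 ?acos_lepi.
Qed.

Lemma sin_mvt t : 0 < t -> exists2 s, 0 < s < t & sin t = t * cos s.
Proof.
move=> t_gt0.
have [s s_in sinE] : exists2 s, s \in `]0, t[%R & sin t - sin 0 = cos s * (t - 0).
  apply: MVT => //.
  exact/continuous_subspaceT/continuous_sin.
by exists s; [rewrite in_itv in s_in | rewrite sin0 !subr0 mulrC in sinE].
Qed.

Lemma sin_le t : 0 <= t -> sin t <= t.
Proof.
rewrite le_eqVlt => /predU1P[<-|t_gt0]; first by rewrite sin0.
have [s _ ->] := sin_mvt t_gt0.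
by rewrite ler_piMr ?cos_le1 ?ltW.
Qed.

Lemma mulr_cos_le_sin t : 0 <= t <= pi -> t * cos t <= sin t.
Proof.
case/andP; rewrite le_eqVlt => /predU1P[<-|t_gt0] t_lepi.
  by rewrite mul0r sin0.
have [s /andP[s_gt0 s_lt] ->] := sin_mvt t_gt0.
apply: ler_wpM2l; first exact: ltW.
by rewrite ler_cos ?in_itv /= ?(ltW s_gt0) ?(ltW s_lt) ?(le_trans (ltW s_lt)) ?(ltW t_gt0).
Qed.

Lemma sqr_le_one_sub_cos a : 0 <= a <= pi / 2 -> a ^+ 2 <= 4 * (1 - cos a).
Proof.
case/andP=> a_ge0 a_le.
have pi_gt0 := pi_gt0 R.
pose h := a / 2.
have aE : a = h *+ 2 by rewrite /h -mulr_natr mulfVK.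
have h_in : 0 <= h <= pi by apply/andP; split; rewrite /h; lra.
have cosh_ge0 : 0 <= cos h by apply: cos_ge0_pihalf; rewrite /h; lra.
clearbody h.
have cosa_ge0 : 0 <= cos a by apply: cos_ge0_pihalf; lra.
have cosaE : cos a = cos h ^+ 2 *+ 2 - 1 by rewrite aE cos_mulr2n.
have hcos_le := mulr_cos_le_sin h_in.
have hcos_ge0 : 0 <= h * cos h by rewrite mulr_ge0 //; case/andP: h_in.
have : (h * cos h) ^+ 2 <= sin h ^+ 2 by rewrite !expr2; exact: ler_pM.
rewrite exprMn sin2cos2 => {}hcos_le.
have : h ^+ 2 <= 1 - cos a.
  rewrite mulr2n in cosaE.
  have cosh2_ge : 1 <= cos h ^+ 2 + cos h ^+ 2 by lra.
  have := ler_wpM2l (sqr_ge0 h) cosh2_ge; rewrite mulr1 mulrDr.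
  lra.
by rewrite aE -mulr_natr exprMn; lra.
Qed.

Lemma cos_shrink_le a c : 0 <= a <= pi / 2 -> 0 <= c <= 1 ->
  cos ((1 - c) * a) <= cos a + 4 * c * (1 - cos a).
Proof.
move=> /[dup] a_in /andP[a_ge0 a_le] /andP[c_ge0 c_le1].
have pi_gt0 := pi_gt0 R.
have ca_ge0 : 0 <= c * a by rewrite mulr_ge0.
have ca_le : c * a <= a by rewrite ler_piMl.
have -> : (1 - c) * a = a - c * a by ring.
rewrite cosB.
have cos_le : cos a * cos (c * a) <= cos a.
  by rewrite ler_piMr ?cos_le1 // cos_ge0_pihalf //; lra.
have sin_le' : sin a * sin (c * a) <= a * (c * a).
  apply: ler_pM; rewrite ?sin_le //; apply: sin_ge0_pi; apply/andP; split; lra.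
have := ler_wpM2l c_ge0 (sqr_le_one_sub_cos a_in).
lra.
Qed.

Lemma acos_le_shrink a b c : 0 <= a <= pi / 2 -> 0 <= c <= 1 -> b <= 1 ->
  cos a + 4 * c * (1 - cos a) <= b -> acos b <= (1 - c) * a.
Proof.
move=> a_in c_in b_le1 b_ge.
have pi_gt0 := pi_gt0 R.
case/andP: (a_in) => a_ge0 a_le; case/andP: (c_in) => c_ge0 c_le1.
have cosa_ge0 : 0 <= cos a by apply: cos_ge0_pihalf; lra.
have gap_ge0 : 0 <= 4 * c * (1 - cos a) by rewrite !mulr_ge0 // subr_ge0 cos_le1.
rewrite acos_le; first exact: le_trans (cos_shrink_le a_in c_in) b_ge.
  by apply/andP; split; lra.
by have ca_ge0 := mulr_ge0 c_ge0 a_ge0; apply/andP; split; nra.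
Qed.

Lemma one_sub_cos_le t u : 0 <= u <= pi -> 0 <= t <= 2 * u ->
  1 - cos t <= 4 * (1 - cos u).
Proof.
move=> /andP[u_ge0 u_le] /andP[t_ge0 t_le].
have pi_gt0 := pi_gt0 R.
have cosu_le1 := cos_le1 u; have cost_ge := cos_geN1 t.
have [u2_le|u2_gt] := lerP (2 * u) pi.
  have : cos (2 * u) <= cos t.
    by rewrite ler_cos ?in_itv /= ?t_ge0 ?(le_trans t_le) ?mulr_ge0.
  rewrite mulr_natl cos_mulr2n mulr2n => cos_ge.
  have := sqr_ge0 (1 - cos u); nra.
have : cos u < 0.
  by rewrite -(@cos_pihalf R) ltr_cos ?in_itv /= ?u_ge0 ?u_le; lra.
lra.
Qed.
End Trigonometry.

Lemma le_scale_inf (R : realType) (T : Type) (S : set T) (f : T -> R) (B k P : R) :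
  S !=set0 -> (forall v, S v -> 0 <= f v) -> 0 <= k -> inf (f @` S) < B ->
  (forall v, S v -> f v < B -> P <= k * f v) -> P <= k * inf (f @` S).
Proof.
move=> [v0 Sv0] f_ge0 k_ge0 inf_lt step.
have f_inf : has_inf (f @` S).
  by split; [exists (f v0), v0 | exists 0 => _ [v Sv <-]; exact: f_ge0].
apply/ler_addgt0Pr => e e_gt0.
pose e' := Num.min (B - inf (f @` S)) (e / (k + 1)).
have e'_gt0 : 0 < e' by rewrite lt_min subr_gt0 inf_lt divr_gt0 ?ltr_wpDl.
have e'_leB : e' <= B - inf (f @` S) by rewrite ge_min lexx.
have e'_le : k * e' <= e.
  apply: (@le_trans _ _ (k * (e / (k + 1)))); first by rewrite ler_wpM2l // ge_min lexx orbT.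
  by rewrite mulrA ler_pdivrMr ?ltr_wpDl // mulrDr mulr1 mulrC lerDl ltW.
have [_ [v Sv <-] fv_lt] := inf_adherent e'_gt0 f_inf.
apply: le_trans (step v Sv _) _; first lra.
have := ler_wpM2l k_ge0 (ltW fv_lt); rewrite mulrDr; lra.
Qed.

Definition max_angle (R : realType) n d (x : 'I_n -> 'rV[R]_d) (v : 'rV[R]_d) : R :=
  \big[Num.max/0]_(i < n) vangle v (x i).

Lemma vangle_unit (R : realType) d (u v : 'rV[R]_d) :
  dotv v v = 1 -> dotv u u = 1 -> vangle v u = acos (dotv v u).
Proof. by move=> v_unit u_unit; rewrite /vangle /norm2 v_unit u_unit sqrtr1 mulr1 divr1. Qed.

Section MaxAngle.
Variables (R : realType) (n d : nat) (x : 'I_n -> 'rV[R]_d).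
Implicit Types v : 'rV[R]_d.

Lemma PhiE : Phi x = inf (max_angle x @` usphere d).
Proof. by []. Qed.

Lemma max_angle_ge0 v : 0 <= max_angle x v.
Proof. exact: bigmax_ge_id. Qed.

Lemma Phi_le_max_angle v : v \in usphere d -> Phi x <= max_angle x v.
Proof.
move=> /set_mem v_in; apply: ge_inf; last by exists v.
by exists 0 => _ [u _ <-]; exact: max_angle_ge0.
Qed.

Lemma Phi_ge0 v : v \in usphere d -> 0 <= Phi x.
Proof.
move=> /set_mem v_in; apply: lb_le_inf; first by exists (max_angle x v), v.
by move=> _ [u _ <-]; exact: max_angle_ge0.
Qed.

Hypothesis x_unit : forall i, dotv (x i) (x i) = 1.

Lemma max_angle_le_acos v a : dotv v v = 1 -> -1 <= a <= 1 ->
  (forall i, a <= dotv v (x i)) -> max_angle x v <= acos a.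
Proof.
move=> v_unit a_in a_le; apply: bigmax_le => [|i _]; first exact: acos_ge0.
rewrite vangle_unit // ler_acos ?in_itv //=.
exact: dotv_unit_bound.
Qed.

Lemma max_angle_lepi v : dotv v v = 1 -> max_angle x v <= pi.
Proof.
move=> v_unit; rewrite -acosN1; apply: max_angle_le_acos => // [|i].
  by apply/andP; split; lra.
by case/andP: (dotv_unit_bound v_unit (x_unit i)).
Qed.

Lemma cos_max_angle_le v j : dotv v v = 1 -> cos (max_angle x v) <= dotv v (x j).
Proof.
move=> v_unit; rewrite -acos_le ?dotv_unit_bound ?max_angle_ge0 ?max_angle_lepi //.
by rewrite -vangle_unit //; exact: le_bigmax.
Qed.

End MaxAngle.

Definition cap (R : realType) d (w : 'rV[R]_d) (lam : R) : set 'rV[R]_d :=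
  [set y | dotv y y = 1 /\ lam <= dotv w y].

Lemma projS_cap (R : realType) d (w z : 'rV[R]_d) (lam s : R) :
  dotv w w = 1 -> 0 < lam -> 0 < s -> norm2 z <= s -> lam * s <= dotv w z ->
  cap w lam (projS z).
Proof.
move=> w_unit lam_gt0 s_gt0 z_le z_ge.
have z_gt0 : 0 < norm2 z.
  by apply: lt_le_trans (dotv_le_norm2 z w_unit); apply: lt_le_trans z_ge; rewrite mulr_gt0.
split; first exact: projS_unit.
rewrite dotv_projS ler_pdivlMr //; apply: le_trans _ z_ge.
exact: (ler_wpM2l (ltW lam_gt0) z_le).
Qed.

Lemma sum_delta_scale (R : pzRingType) (V : lmodType R) n (i : 'I_n) (y : 'I_n -> V) :
  \sum_j (i == j)%:R *: y j = y i.
Proof.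
rewrite (bigD1 i) //= eqxx scale1r big1 ?addr0 // => j j_neq.
by rewrite eq_sym (negbTE j_neq) scale0r.
Qed.

Definition party_coef (R : realType) n (eta : 'I_n -> 'I_n -> R) (i k : 'I_n) : R :=
  (i == k)%:R + eta i k.

Section PartyUpdate.
Variables (R : realType) (n d : nat) (eta : 'I_n -> 'I_n -> R).
Hypothesis eta_ge0 : forall i j, 0 <= eta i j.
Implicit Types y : 'I_n -> 'rV[R]_d.

Lemma party_coef_ge0 i k : 0 <= party_coef eta i k.
Proof. by rewrite addr_ge0. Qed.

Lemma sum_party_coef i : \sum_k party_coef eta i k = 1 + \sum_k eta i k.
Proof.
rewrite big_split /= (bigD1 i) //= eqxx big1 ?addr0 // => k k_neq.
by rewrite eq_sym (negbTE k_neq).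
Qed.

Lemma one_add_sum_eta_gt0 i : 0 < 1 + \sum_k eta i k.
Proof. by apply: ltr_wpDr ltr01; apply: sumr_ge0. Qed.

Lemma party_update_comb y i :
  party_update eta y i = projS (\sum_k party_coef eta i k *: y k).
Proof.
rewrite /party_update; congr projS.
by under [RHS]eq_bigr do rewrite scalerDl; rewrite big_split /= sum_delta_scale.
Qed.

Variables (w : 'rV[R]_d) (lam : R).
Hypotheses (w_unit : dotv w w = 1) (lam_gt0 : 0 < lam).

Lemma party_comb_bounds y i : (forall k, cap w lam (y k)) ->
  norm2 (\sum_k party_coef eta i k *: y k) <= 1 + \sum_k eta i k /\
  lam * (1 + \sum_k eta i k) <= dotv w (\sum_k party_coef eta i k *: y k).
Proof.
move=> y_cap; rewrite -sum_party_coef; split.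
  exact: (norm2_comb_le (fun k => proj1 (y_cap k)) (party_coef_ge0 i)).
exact: (dotv_comb_ge (party_coef_ge0 i) (fun k => proj2 (y_cap k))).
Qed.

Lemma party_update_cap y : (forall k, cap w lam (y k)) ->
  forall i, cap w lam (party_update eta y i).
Proof.
move=> y_cap i; have [z_le z_ge] := party_comb_bounds i y_cap.
rewrite party_update_comb; apply: projS_cap z_le z_ge => //.
exact: one_add_sum_eta_gt0.
Qed.

Lemma iter_party_update_cap x t : (forall i, cap w lam (x i)) ->
  forall i, cap w lam (iter t (party_update eta) x i).
Proof. by move=> x_cap; elim: t => //= t; exact: party_update_cap. Qed.

Lemma adj_mx_ge0 i j : 0 <= adj_mx eta i j.
Proof. by rewrite mxE; case: ifP. Qed.

Lemma adj_mx_expr_ge0 t i j : 0 <= (adj_mx eta ^+ t) i j.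
Proof.
elim: t i j => [|t IH] i j; first by rewrite expr0 mxE ler0n.
rewrite exprS -mulmxE mxE; apply: sumr_ge0 => k _.
by rewrite mulr_ge0 ?adj_mx_ge0.
Qed.

Variables (m H : R).
Hypotheses (m_gt0 : 0 < m) (m_le_eta : forall i j, m * adj_mx eta i j <= eta i j)
  (sum_eta_le : forall i, \sum_k eta i k <= H).

Lemma party_update_coef_ge y : (forall k, cap w lam (y k)) ->
  exists V : 'I_n -> 'I_n -> R,
    (forall i k, m / (1 + H) * adj_mx eta i k <= V i k) /\
    (forall i, party_update eta y i = \sum_k V i k *: y k).
Proof.
move=> y_cap; pose z i := \sum_k party_coef eta i k *: y k.
exists (fun i k => (norm2 (z i))^-1 * party_coef eta i k); split; last first.
  move=> i; rewrite party_update_comb /projS scaler_sumr.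
  by apply: eq_bigr => k _; rewrite scalerA.
move=> i k; have [z_le z_ge] := party_comb_bounds i y_cap.
have H_ge0 : 0 <= H by apply: le_trans (sum_eta_le i); apply: sumr_ge0.
have z_le' : norm2 (z i) <= 1 + H by apply: le_trans z_le _; rewrite lerD2l.
have z_gt0 : 0 < norm2 (z i).
  apply: lt_le_trans (le_trans z_ge (dotv_le_norm2 _ w_unit)).
  by apply: mulr_gt0 => //; exact: one_add_sum_eta_gt0.
rewrite mulrAC mulrC; apply: ler_pM.
- by rewrite invr_ge0; lra.
- by rewrite mulr_ge0 ?adj_mx_ge0 ?(ltW m_gt0).
- by rewrite lef_pV2 ?posrE //; lra.
- by apply: le_trans (m_le_eta i k) _; rewrite lerDr ler0n.
Qed.

Lemma iter_party_update_coef_ge x t : (forall i, cap w lam (x i)) ->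
  exists W : 'I_n -> 'I_n -> R,
    (forall i j, (m / (1 + H)) ^+ t * (adj_mx eta ^+ t) i j <= W i j) /\
    (forall i, iter t (party_update eta) x i = \sum_j W i j *: x j).
Proof.
move=> x_cap; elim: t => [|t [W [W_ge xE]]].
  exists (fun i j => (i == j)%:R); split=> [i j|i]; last by rewrite sum_delta_scale.
  by rewrite expr0 mul1r mxE.
have [V [V_ge yE]] := party_update_coef_ge (iter_party_update_cap t x_cap).
exists (fun i j => \sum_k V i k * W k j); split=> [i j|i]; last first.
  rewrite /= yE /=; under eq_bigr do rewrite xE scaler_sumr.
  rewrite exchange_big; apply: eq_bigr => j _; rewrite scaler_suml.
  by apply: eq_bigr => k _; rewrite scalerA.
have kappa_ge0 : 0 <= m / (1 + H).
  have H_ge0 : 0 <= H by apply: le_trans (sum_eta_le i); apply: sumr_ge0.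
  by rewrite divr_ge0 ?ltW //; lra.
rewrite !exprS -mulmxE mxE mulr_sumr; apply: ler_sum => k _.
rewrite mulrACA; apply: ler_pM; rewrite ?V_ge ?W_ge //.
- by rewrite mulr_ge0 ?adj_mx_ge0.
- by rewrite mulr_ge0 ?exprn_ge0 ?adj_mx_expr_ge0.
Qed.

End PartyUpdate.

Section Contraction.
Variables (R : realType) (n d : nat) (x x' : 'I_n -> 'rV[R]_d) (W : 'I_n -> 'I_n -> R).
Variables (w : 'rV[R]_d) (lam eps : R).
Hypotheses (w_unit : dotv w w = 1) (lam_gt0 : 0 < lam).
Hypotheses (eps_gt0 : 0 < eps) (eps_le1 : eps <= 1).
Hypotheses (x_unit : forall i, dotv (x i) (x i) = 1) (x_ge : forall i, lam <= dotv w (x i)).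
Hypothesis x'_unit : forall i, dotv (x' i) (x' i) = 1.
Hypotheses (W_ge : forall i j, eps <= W i j) (x'E : forall i, x' i = \sum_j W i j *: x j).

Lemma weights_ge0 i j : 0 <= W i j.
Proof. exact: le_trans (ltW eps_gt0) (W_ge i j). Qed.

Lemma dot_lb_le1 (i : 'I_n) : lam <= 1.
Proof.
apply: le_trans (x_ge i) _.
by case/andP: (dotv_unit_bound w_unit (x_unit i)).
Qed.

Lemma row_sum_gain i p q :
  lam * eps ^+ 2 * (1 - dotv (x p) (x q)) / 2 <= \sum_j W i j - 1.
Proof.
have lam_le1 := dot_lb_le1 i.
have comb_unit : dotv (\sum_j W i j *: x j) (\sum_j W i j *: x j) = 1.
  by rewrite -x'E.
have lamT : lam * \sum_j W i j <= 1.
  apply: le_trans (dotv_comb_ge (weights_ge0 i) x_ge) _.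
  by rewrite -x'E; case/andP: (dotv_unit_bound w_unit (x'_unit i)).
have gap_ge0 : 0 <= 1 - dotv (x p) (x q).
  by rewrite subr_ge0; case/andP: (dotv_unit_bound (x_unit p) (x_unit q)).
have T2 : eps ^+ 2 * (1 - dotv (x p) (x q)) <= (\sum_j W i j) ^+ 2 - 1.
  apply: le_trans (comb_unit_pair_le x_unit p q (weights_ge0 i) comb_unit).
  apply: ler_wpM2r => //; rewrite expr2.
  by apply: ler_pM; rewrite ?(ltW eps_gt0) ?W_ge.
have T_ge0 : 0 <= \sum_j W i j by apply: sumr_ge0 => j _; exact: weights_ge0.
move: (\sum_j W i j) (dotv (x p) (x q)) lamT T2 T_ge0 gap_ge0 => T g lamT T2 T_ge0 gap_ge0.
have T1_ge0 : 0 <= T - 1 by have := mulr_ge0 (sqr_ge0 eps) gap_ge0; nra.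
have lamT_le : 0 <= 1 - lam * T by rewrite subr_ge0.
have lam_le : 0 <= 1 - lam by rewrite subr_ge0.
(* 2 (T - 1) - lam (T^2 - 1) = (T - 1) (1 - lam T) + (T - 1) (1 - lam) *)
have := mulr_ge0 T1_ge0 lamT_le; have := mulr_ge0 T1_ge0 lam_le.
have := ler_wpM2l (ltW lam_gt0) T2.
lra.
Qed.

Lemma max_angle_contract v p q : dotv v v = 1 ->
  max_angle x v <= 2 * acos (dotv (x p) (x q)) -> max_angle x v <= acos (lam / 2) ->
  max_angle x' v <= (1 - (lam * eps) ^+ 2 / 64) * max_angle x v.
Proof.
move=> v_unit le_2gamma le_acos.
have pi_gt0 := pi_gt0 R; have lam_ge0 := ltW lam_gt0.
have lam_le1 := dot_lb_le1 p.
have lam2_in : -1 <= lam / 2 <= 1 by apply/andP; split; lra.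
have g_in := dotv_unit_bound (x_unit p) (x_unit q).
have t_in : 0 <= max_angle x v <= pi by rewrite max_angle_ge0 max_angle_lepi.
have cos_ge : lam / 2 <= cos (max_angle x v).
  by move: le_acos; rewrite -ler_cos ?in_itv //= ?acos_ge0 ?acos_lepi // acosK ?in_itv.
have t_le : max_angle x v <= pi / 2.
  by apply: le_trans le_acos _; rewrite -acos0 ler_acos ?in_itv //=; lra.
have cos_gap : 1 - cos (max_angle x v) <= 4 * (1 - dotv (x p) (x q)).
  have := one_sub_cos_le (t := max_angle x v) (u := acos (dotv (x p) (x q))).
  by rewrite acosK ?in_itv //; apply; rewrite ?acos_ge0 ?acos_lepi ?max_angle_ge0.
have c_in : 0 <= (lam * eps) ^+ 2 / 64 <= 1.
  have eps_ge0 := ltW eps_gt0.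
  have sqr_le1 : (lam * eps) ^+ 2 <= 1 by rewrite expr_le1 ?mulr_ge0 //; apply: mulr_ile1.
  by apply/andP; split; [rewrite divr_ge0 ?sqr_ge0 | lra].
apply: bigmax_le => [|i _]; first by rewrite mulr_ge0 ?max_angle_ge0 //; lra.
rewrite vangle_unit ?x'_unit //.
apply: acos_le_shrink; rewrite ?t_le ?max_angle_ge0 //.
  by case/andP: (dotv_unit_bound v_unit (x'_unit i)).
have b_ge : (\sum_j W i j) * cos (max_angle x v) <= dotv v (x' i).
  rewrite x'E dotv_sumr mulr_suml; apply: ler_sum => j _.
  by rewrite ler_wpM2l ?weights_ge0 ?cos_max_angle_le.
have gain := row_sum_gain i p q.
have gap_ge0 : 0 <= 1 - dotv (x p) (x q) by rewrite subr_ge0; case/andP: g_in.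
have gain_ge0 : 0 <= lam * eps ^+ 2 * (1 - dotv (x p) (x q)) / 2.
  exact: divr_ge0 (mulr_ge0 (mulr_ge0 lam_ge0 (sqr_ge0 eps)) gap_ge0) (ler0n _ 2).
move: (\sum_j W i j) b_ge gain (le_trans gain_ge0 gain) => T b_ge gain T1_ge0.
(* With a := cos (max_angle x v) and g := dotv (x p) (x q):
   dotv v (x' i) >= T a >= a + (T - 1) lam / 2
                 >= a + (lam eps)^2 (1 - g) / 4 >= a + (lam eps)^2 (1 - a) / 16. *)
have := ler_wpM2l T1_ge0 cos_ge.
have := ler_wpM2l (divr_ge0 lam_ge0 (ler0n _ 2)) gain.
have := ler_wpM2l (divr_ge0 (sqr_ge0 (lam * eps)) (ler0n _ 16)) cos_gap.
lra.
Qed.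

End Contraction.

Lemma fin_pos_lb (R : realType) (T : finType) (P : pred T) (f : T -> R) :
  (forall t, P t -> 0 < f t) -> exists2 m : R, 0 < m <= 1 & forall t, P t -> m <= f t.
Proof.
move=> f_gt0; exists (\big[Num.min/1]_(t | P t) f t) => [|t Pt]; last exact: bigmin_le_cond.
by rewrite bigmin_le_id andbT; apply: lt_bigmin.
Qed.

Lemma iter_party_update_weights_ge (R : realType) n d t (eta : 'I_n -> 'I_n -> R) :
  (forall i j, 0 <= eta i j) -> (forall i j, 0 < (adj_mx eta ^+ t) i j) ->
  exists2 eps : R, 0 < eps <= 1 &
    forall (w : 'rV[R]_d) lam x, dotv w w = 1 -> 0 < lam -> (forall i, cap w lam (x i)) ->
    exists W : 'I_n -> 'I_n -> R, (forall i j, eps <= W i j) /\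
      (forall i, iter t (party_update eta) x i = \sum_j W i j *: x j).
Proof.
move=> eta_ge0 A_gt0.
have [m /andP[m_gt0 m_le1] m_le] :=
  fin_pos_lb (P := fun ij : 'I_n * 'I_n => 0 < eta ij.1 ij.2) (fun _ eta_gt0 => eta_gt0).
have m_le_eta i j : m * adj_mx eta i j <= eta i j.
  rewrite mxE; case: ifP => [eta_gt0|_]; last by rewrite mulr0.
  by rewrite mulr1; exact: (m_le (i, j)).
have [mu /andP[mu_gt0 mu_le1] mu_le] :=
  fin_pos_lb (P := predT) (f := fun ij : 'I_n * 'I_n => (adj_mx eta ^+ t) ij.1 ij.2)
    (fun ij _ => A_gt0 ij.1 ij.2).
pose H := \sum_i \sum_k eta i k.
have sum_eta_le i : \sum_k eta i k <= H.
  by rewrite /H [X in _ <= X](bigD1 i) //= lerDl sumr_ge0 // => j _; apply: sumr_ge0.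
have H_ge0 : 0 <= H by apply: sumr_ge0 => i _; apply: sumr_ge0.
clearbody H.
have kappa_in : 0 < m / (1 + H) <= 1.
  by apply/andP; split; [rewrite divr_gt0 //; lra | rewrite ler_pdivrMr; lra].
case/andP: kappa_in => kappa_gt0 kappa_le1.
exists ((m / (1 + H)) ^+ t * mu).
  have kappa_ge0 := ltW kappa_gt0; have mu_ge0 := ltW mu_gt0.
  by rewrite mulr_gt0 ?exprn_gt0 //= mulr_ile1 ?exprn_ge0 ?exprn_ile1.
move=> w lam x w_unit lam_gt0 x_cap.
have [W [W_ge xE]] :=
  iter_party_update_coef_ge eta_ge0 w_unit lam_gt0 m_gt0 m_le_eta sum_eta_le t x_cap.
exists W; split=> // i j; apply: le_trans (W_ge i j).
by apply: ler_wpM2l; [rewrite exprn_ge0 // ltW | exact: (mu_le (i, j))].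
Qed.

Lemma Phi_le_scale (R : realType) n d (x y : 'I_n -> 'rV[R]_d) (w : 'rV[R]_d) (i0 : 'I_n)
    (alpha beta gamma k : R) :
  x i0 \in usphere d -> w \in usphere d -> 0 <= k -> alpha < beta ->
  max_angle x (x i0) <= gamma -> max_angle x w <= alpha ->
  (forall v, v \in usphere d -> max_angle x v <= 2 * gamma -> max_angle x v <= beta ->
     Phi y <= k * max_angle x v) ->
  Phi y <= k * Phi x.
Proof.
move=> x0_in w_in k_ge0 alpha_lt x0_le w_le step.
have x0_ge0 := max_angle_ge0 x (x i0); have w_ge0 := max_angle_ge0 x w.
have [gamma_le0|gamma_gt0] := lerP gamma 0.
  (* gamma = 0: all agents coincide and the centre x i0 is optimal. *)
  have x0_le0 : max_angle x (x i0) <= 0 := le_trans x0_le gamma_le0.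
  apply: le_trans (step _ x0_in _ _) _; [lra | lra |].
  exact: (ler_wpM2l k_ge0 (le_trans x0_le0 (Phi_ge0 x w_in))).
rewrite (PhiE x); apply: (le_scale_inf (B := Num.min (2 * gamma) beta)) => //.
- by exists w; exact: set_mem.
- by move=> v _; exact: max_angle_ge0.
- rewrite -(PhiE x) lt_min; apply/andP; split.
    by apply: le_lt_trans (Phi_le_max_angle x x0_in) _; lra.
  by apply: le_lt_trans (Phi_le_max_angle x w_in) _; lra.
- move=> v v_in; rewrite lt_min => /andP[v_le_gamma v_le_beta].
  by apply: step; [exact: mem_set | exact: ltW | exact: ltW].
Qed.

Theorem lemma3p13 (R : realType) (n d : nat) (hn : (1 <= n)%N) (hd : (1 <= d)%N)
  (eta : 'I_n -> 'I_n -> R)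
  (heta : forall i j, 0 <= eta i j)
  (hA : forall i j, 0 < (adj_mx eta ^+ n) i j)
  (lam : R) (hlam : 0 < lam) :
  exists c : R, 0 < c /\
    forall (x : 'I_n -> 'rV[R]_d) (w : 'rV[R]_d),
      (forall i, x i \in usphere d) ->
      w \in usphere d ->
      (forall i, lam <= dotv w (x i)) ->
      Phi (iter n (party_update eta) x) <= (1 - c) * Phi x.
Proof.
pose i0 : 'I_n := Ordinal hn.
have [eps /andP[eps_gt0 eps_le1] weights] := iter_party_update_weights_ge d heta hA.
exists ((lam * eps) ^+ 2 / 64); split; first by rewrite divr_gt0 // exprn_gt0 // mulr_gt0.
move=> x w x_in w_in x_ge.
have w_unit : dotv w w = 1 by apply/usphereP.
have x_unit i : dotv (x i) (x i) = 1 by apply/usphereP.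
have x_cap i : cap w lam (x i) by split.
have x'_unit i := proj1 (iter_party_update_cap heta w_unit hlam n x_cap i).
have [W [W_ge x'E]] := weights w lam x w_unit hlam x_cap.
have lam_le1 := dot_lb_le1 w_unit x_unit x_ge i0.
have [[p q] _ pq_min] := arg_minP (fun pq : 'I_n * 'I_n => dotv (x pq.1) (x pq.2))
  (isT : predT (i0, i0)).
have g_in := dotv_unit_bound (x_unit p) (x_unit q).
apply: (Phi_le_scale (x_in i0) w_in (alpha := acos lam) (beta := acos (lam / 2))
  (gamma := acos (dotv (x p) (x q)))).
- have lam_ge0 := ltW hlam; have eps_ge0 := ltW eps_gt0.
  have : (lam * eps) ^+ 2 <= 1 by rewrite expr_le1 ?mulr_ge0 // mulr_ile1.
  lra.
- by rewrite ltr_acos ?in_itv /=; lra.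
- by apply: max_angle_le_acos => // k; exact: (pq_min (i0, k)).
- by apply: max_angle_le_acos => //; apply/andP; split; lra.
- move=> v v_in le_2gamma le_beta; apply: le_trans (Phi_le_max_angle _ v_in) _.
  have v_unit : dotv v v = 1 by apply/usphereP.
  exact: (max_angle_contract w_unit hlam eps_gt0 eps_le1 x_unit x_ge x'_unit W_ge x'E
    v_unit le_2gamma le_beta).
Qed.
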